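(* Consider the D2EAL algorithm (without periodic reset) described in the context, run for a horizon $T\ge1$ with learning parameters $\eta_\alpha>0,\eta_w>0$ on an arbitrary target sequence and arbitrary expert predictions, and fix an agent $i\in[N]$. Assume (Assumption 1) that $\Omega_i(t)\subseteq\Omega_i(t-1)$ for all $t=1,\dots,T$ (hence $\Lambda_i(t)\subseteq\Lambda_i(t-1)$). Then $$R_i^S(T):=\hat L_{T,i}-\min_{j\in\Lambda_i(T)}\bar L_{T,j}\le\frac{\eta_wT}{8}+\frac{\log d_i(0)}{\eta_w}.$$
   Context: Setup. There are $N\ge 1$ agents indexed by $i\in[N]$ and a horizon $T\ge1$. The outcome space $\mathcal Y$ and action space $\mathcal A$ are convex subsets of $\mathbb R^n$. The loss $l:\mathcal A\times\mathcal Y\to[0,1]$ is convex in its first argument. The target sequence $y_1,\dots,y_T\in\mathcal Y$ is arbitrary. For each agent $i$ and each $t\ge1$, an ''expert'' supplies an arbitrary prediction $f_{t,i}\in\mathcal A$ of $y_t$ (available at time $t-1$). Agents communicate over a time-varying undirected graph; $\Omega_i(t)$ is the set of neighbours of agent $i$ at time $t$, $\Lambda_i(t):=\Omega_i(t)\cup\{i\}$ and $d_i(t):=|\Lambda_i(t)|$. D2EAL (without periodic reset). Initialize $\hat f_{0,i}=f_{1,i}$, $\hat\alpha_i(0)=\hat\alpha'_i(0)=\hat w_{ii}(0)=1$ for all $i$. For $t=0,1,\dots,T-1$, each agent $i$ computes: $\alpha_i(t)=\hat\alpha_i(t)/(\hat\alpha_i(t)+\hat\alpha'_i(t))$; individual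 prediction $\bar f_{t+1,i}=\alpha_i(t)f_{t+1,i}+(1-\alpha_i(t))\hat f_{t,i}$; social weights $w_{ij}(t)=\hat w_{jj}(t)/\sum_{j'\in\Lambda_i(t)}\hat w_{j'j'}(t)$ for $j\in\Lambda_i(t)$ and $w_{ij}(t)=0$ otherwise; social prediction $\hat f_{t+1,i}=\sum_{j\in\Lambda_i(t)}w_{ij}(t)\bar f_{t+1,j}$. After $y_{t+1}$ is revealed, define the losses $l_{t+1,i}=l(f_{t+1,i},y_{t+1})$, $\hat l^-_{t+1,i}=l(\hat f_{t,i},y_{t+1})$, $\bar l_{t+1,i}=l(\bar f_{t+1,i},y_{t+1})$, $\hat l_{t+1,i}=l(\hat f_{t+1,i},y_{t+1})$, and update $\hat\alpha_i(t+1)=\hat\alpha_i(t)e^{-\eta_\alpha l_{t+1,i}}$, $\hat\alpha'_i(t+1)=\hat\alpha'_i(t)e^{-\eta_\alpha \hat l^-_{t+1,i}}$, $\hat w_{ii}(t+1)=\hat w_{ii}(t)e^{-\eta_w\bar l_{t+1,i}}$. Cumulative losses: $L_{T,i}=\sum_{t=1}^T l_{t,i}$, $\hat L^-_{T,i}=\sum_{t=1}^T\hat l^-_{t,i}$, $\bar L_{T,i}=\sum_{t=1}^T\bar l_{t,i}$, $\hat L_{T,i}=\sum_{t=1}^T\hat l_{t,i}$. *)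

From mathcomp Require Import all_boot all_order all_algebra.
From mathcomp Require Import all_classical all_reals all_analysis.
Set Implicit Arguments. Unset Strict Implicit. Unset Printing Implicit Defensive.
Import Order.TTheory GRing.Theory Num.Theory.
Local Open Scope ring_scope.

Section D2EAL.
Variables (R : realType) (N n : nat).
Notation vec := 'rV[R]_n.

Definition convex_subset (S : vec -> Prop) :=
  forall x y (t : R), S x -> S y -> 0 <= t <= 1 -> S (t *: x + (1 - t) *: y).

Definition convex_in_first (A Y : vec -> Prop) (l : vec -> vec -> R) :=
  forall a b y (t : R), A a -> A b -> Y y -> 0 <= t <= 1 ->
    l (t *: a + (1 - t) *: b) y <= t * l a y + (1 - t) * l b y.

Definition Lambda (Omega : nat -> 'I_N -> {set 'I_N}) (t : nat) (i : 'I_N)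
  : {set 'I_N} := i |: Omega t i.

Record state := State {
  a_hat  : 'I_N -> R;
  a_hat' : 'I_N -> R;
  w_hat  : 'I_N -> R;
  f_hat  : 'I_N -> vec }.

Variables (l : vec -> vec -> R) (y : nat -> vec) (f : nat -> 'I_N -> vec)
          (Omega : nat -> 'I_N -> {set 'I_N}) (eta_a eta_w : R).

Definition alpha (s : state) (i : 'I_N) : R :=
  a_hat s i / (a_hat s i + a_hat' s i).

(* individual prediction \bar f_{t+1,i}, computed from the state at time t *)
Definition f_bar (t : nat) (s : state) (i : 'I_N) : vec :=
  alpha s i *: f t.+1 i + (1 - alpha s i) *: f_hat s i.

Definition w (t : nat) (s : state) (i j : 'I_N) : R :=
  if j \in Lambda Omega t i then
    w_hat s j / (\sum_(j' in Lambda Omega t i) w_hat s j')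
  else 0.

Definition step (t : nat) (s : state) : state :=
  State (fun i => a_hat s i * expR (- (eta_a * l (f t.+1 i) (y t.+1))))
        (fun i => a_hat' s i * expR (- (eta_a * l (f_hat s i) (y t.+1))))
        (fun i => w_hat s i * expR (- (eta_w * l (f_bar t s i) (y t.+1))))
        (fun i => \sum_(j in Lambda Omega t i) w t s i j *: f_bar t s j).

Fixpoint run (t : nat) : state :=
  match t with
  | 0 => State (fun _ => 1) (fun _ => 1) (fun _ => 1) (fun i => f 1 i)
  | t'.+1 => step t' (run t')
  end.

Definition Lbar (T : nat) (i : 'I_N) : R :=
  \sum_(t < T) l (f_bar t (run t) i) (y t.+1).

Definition Lhat (T : nat) (i : 'I_N) : R :=
  \sum_(t < T) l (f_hat (run t.+1) i) (y t.+1).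

End D2EAL.

(* The potential W_t is the total private weight of the closed neighbourhood
   Lambda_i(t), where agent k's private weight after t rounds is
   exp (- eta_w Lbar_{t,k}).  Because Lambda_i(t+1) is contained in Lambda_i(t),
   W_{t+1} is at most W_t times the average of exp (- eta_w lbar_{t+1,k}) under
   the social weights w_ik(t);
   convexity of exp reduces this average to a Bernoulli moment generating
   function, which Hoeffding's lemma bounds by
   exp (- eta_w sum_k w_ik(t) lbar_{t+1,k} + eta_w^2 / 8), and convexity of the
   loss bounds the mixed loss below by lhat_{t+1,i}.  Hence, for j in
   Lambda_i(T), exp (- eta_w Lbar_{T,j}) <= W_T
   <= d_i(0) exp (- eta_w Lhat_{T,i} + eta_w^2 T / 8); take logarithms. *)

From mathcomp Require Import all_boot all_order all_algebra.
From mathcomp Require Import all_classical all_reals all_analysis.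
From mathcomp Require Import ring lra.
Set Implicit Arguments.
Unset Strict Implicit.
Unset Printing Implicit Defensive.
Import Order.TTheory GRing.Theory Num.Theory.
Local Open Scope ring_scope.

Section ExpInequalities.
Variable R : realType.
Implicit Types p u v x : R.

Lemma is_derive_comp (f g : R -> R) x (df dg : R) :
  is_derive x 1 f df -> is_derive (f x) 1 g dg -> is_derive x 1 (g \o f) (dg * df).
Proof.
move=> hf hg.
have Df : derivable f x 1 by apply: ex_derive.
have Dg : derivable g (f x) 1 by apply: ex_derive.
apply: DeriveDef.
  by apply/derivable1_diffP; apply: differentiable_comp; apply/derivable1_diffP.
have := derive1_comp Df Dg; rewrite !derive1E.
by case: hf => _ ->; case: hg => _ ->.
Qed.

Lemma is_derive_le0_le (F dF : R -> R) u : 0 <= u ->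
  (forall x, is_derive x 1 F (dF x)) -> (forall x, 0 <= x -> dF x <= 0) ->
  F u <= F 0.
Proof.
move=> u0 hF dF_le0.
case: (ltrgtP u 0) u0 => // [u_gt0 _|-> _]; last by [].
have [c c_in E] := MVT u_gt0 (fun x _ => hF x)
  (derivable_within_continuous (fun x _ => @ex_derive _ _ _ _ _ _ _ (hF x))).
rewrite -subr_le0 E mulr_le0_ge0 //; last by rewrite subr0 ltW.
apply: dF_le0.
by move: c_in; rewrite in_itv /= => /andP[/ltW].
Qed.

(* [tanh (v / 2) <= v / 2] *)
Lemma expRB1_le v : 0 <= v -> expR v - 1 <= v / 2 * (expR v + 1).
Proof.
move=> v0.
pose F x := expR x - 1 - x / 2 * (expR x + 1).
suff : F v <= F 0 by rewrite /F expR0 !mul0r; lra.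
apply: (@is_derive_le0_le F (fun x => (expR x - x * expR x - 1) / 2)) => // x.
  have -> : F = expR - cst 1 - 2^-1 *: (id * (expR + cst 1)).
    by apply/funext => z; rewrite /F !fctE /GRing.scale /=; ring.
  by apply: is_derive_eq; rewrite !fctE /= /GRing.scale /=; field.
move=> x0; apply: mulr_le0_ge0; last by rewrite invr_ge0 ler0n.
have := expR_ge1Dx (- x); have := expRxMexpNx_1 x; have := expR_gt0 x; nra.
Qed.

Lemma bernoulli_mgf_gt0 p u : 0 <= p <= 1 -> 0 < 1 - p + p * expR (- u).
Proof. by move=> /andP[p0 p1]; have := expR_gt0 (- u); nra. Qed.

(* The left side minus the right side is the numerator of the derivative of
   [u |-> ln (1 - p + p e^-u) + p u - u^2 / 8] at [x]. *)
Lemma bernoulli_var_le p x : 0 <= p <= 1 -> 0 <= x ->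
  p * (1 - p) * (1 - expR (- x)) <= x / 4 * (1 - p + p * expR (- x)).
Proof.
move=> /andP[p0 p1] x0.
set E := expR (- x); set b := expR (x / 2); set q := p * (1 - p); set K := x / 4.
have Eb : E * (b * b) = 1.
  by rewrite /E /b -!expRD (_ : - x + (x / 2 + x / 2) = 0) ?expR0 //; field.
have b1 : 1 <= b by rewrite /b; have := expR_ge1Dx (x / 2); lra.
have hb : b - 1 <= K * (b + 1).
  have /expRB1_le : 0 <= x / 2 by lra.
  by rewrite -/b (_ : x / 2 / 2 = K) // /K; field.
have q0 : 0 <= q by rewrite /q; nra.
have K0 : 0 <= K by rewrite /K; lra.
have c1 : q * (b * b - 1) <= K * ((1 - p) * (b * b) + p).
  have : q * (b + 1) * (b - 1) <= q * (b + 1) * (K * (b + 1)).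
    by apply: ler_wpM2l => //; apply: mulr_ge0 => //; lra.
  have : 0 <= K * ((1 - p) * b - p) ^+ 2 by apply: mulr_ge0 => //; apply: sqr_ge0.
  have -> : K * ((1 - p) * b - p) ^+ 2 =
      K * ((1 - p) * (b * b) + p) - q * (b + 1) * (K * (b + 1)).
    by rewrite /q; ring.
  have -> : q * (b * b - 1) = q * (b + 1) * (b - 1) by ring.
  lra.
have E0 : 0 <= E by apply: expR_ge0.
have := ler_wpM2l E0 c1.
have -> : E * (q * (b * b - 1)) = q * (E * (b * b)) - q * E by ring.
have -> : E * (K * ((1 - p) * (b * b) + p)) = K * (1 - p) * (E * (b * b)) + K * p * E.
  by ring.
rewrite Eb -/q -/K; lra.
Qed.

Lemma ln_bernoulli_mgf_le p u : 0 <= p <= 1 -> 0 <= u ->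
  ln (1 - p + p * expR (- u)) <= - (u * p) + u ^+ 2 / 8.
Proof.
move=> p01 u0.
pose D x := 1 - p + p * expR (- x).
pose dD x := 0 + p *: (expR (- x) * - 1).
have hD x : is_derive x 1 D (dD x).
  have -> : D = cst (1 - p) + p \*: (expR \o -%R) by apply/funext => z.
  have hE : is_derive x 1 (expR \o -%R) (expR (- x) * - 1).
    by apply: is_derive_comp; try exact: is_deriveNid; try exact: is_derive_expR.
  exact: is_deriveD (is_derive_cst _ _ _) (is_deriveZ p hE).
pose F x := ln (D x) + p * x - 8^-1 * (x * x).
suff : F u <= F 0.
  by rewrite /F /D oppr0 expR0 mulr1 subrK ln1 expr2; lra.
apply: (@is_derive_le0_le F (fun x => (D x)^-1 * dD x + p - 8^-1 * (x + x))) => // x.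
  have -> : F = (@ln R \o D) + p \*: (id : R -> R) -
      8^-1 \*: ((id : R -> R) * (id : R -> R)) by apply/funext => z.
  have hL := is_derive_comp (hD x) (is_derive1_ln (bernoulli_mgf_gt0 x p01)).
  apply: is_derive_eq (is_deriveB (is_deriveD hL (is_deriveZ p (is_derive_id x 1)))
    (is_deriveZ 8^-1 (is_deriveM (is_derive_id x 1) (is_derive_id x 1)))) _.
  by rewrite /GRing.scale /=; ring.
move=> x0; have Dx := bernoulli_mgf_gt0 x p01.
have -> : (D x)^-1 * dD x + p - 8^-1 * (x + x) =
    (p * (1 - p) * (1 - expR (- x)) - x / 4 * D x) / D x.
  by rewrite /dD /D /GRing.scale /=; field; rewrite gt_eqF.
apply: mulr_le0_ge0; last by rewrite invr_ge0 ltW.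
rewrite subr_le0.
exact: bernoulli_var_le.
Qed.

Lemma hoeffding_bernoulli p u : 0 <= p <= 1 -> 0 <= u ->
  1 - p + p * expR (- u) <= expR (- (u * p) + u ^+ 2 / 8).
Proof.
move=> p01 u0.
rewrite -[X in X <= _]lnK ?posrE ?bernoulli_mgf_gt0 // ler_expR.
exact: ln_bernoulli_mgf_le.
Qed.

Lemma expR_chord eta x : 0 <= x <= 1 ->
  expR (- (eta * x)) <= 1 - x + x * expR (- eta).
Proof.
move=> /andP[x0 x1].
have := convex_expR (Itv01 x0 x1) (- eta) 0.
rewrite !convRE /= expR0 /unstable.onem mulr0 addr0 mulr1.
by rewrite mulrN mulrC addrC.
Qed.

Lemma mix_expR_le (I : Type) (r : seq I) (P : pred I) (c x : I -> R) eta :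
  0 <= eta -> (forall k, 0 <= c k) -> (forall k, 0 <= x k <= 1) ->
  \sum_(k <- r | P k) c k = 1 ->
  \sum_(k <- r | P k) c k * expR (- (eta * x k)) <=
    expR (- (eta * \sum_(k <- r | P k) c k * x k) + eta ^+ 2 / 8).
Proof.
move=> eta0 c0 x01 c1.
set X := \sum_(k <- r | P k) c k * x k.
have X01 : 0 <= X <= 1.
  rewrite sumr_ge0 => [|k _]; last by apply: mulr_ge0; case/andP: (x01 k).
  rewrite -c1 ler_sum // => k _; rewrite ler_piMr //; by case/andP: (x01 k).
apply: (@le_trans _ _ (1 - X + X * expR (- eta))); last first.
  exact: hoeffding_bernoulli.
have -> : 1 - X + X * expR (- eta) =
    \sum_(k <- r | P k) c k * (1 - x k + x k * expR (- eta)).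
  under eq_bigr do rewrite mulrDr mulrBr mulr1 mulrA.
  by rewrite big_split sumrB /= c1 -/X -mulr_suml.
by apply: ler_sum => k _; apply: ler_wpM2l => //; exact: expR_chord.
Qed.

End ExpInequalities.

Section Jensen.
Variables (R : realType) (n : nat) (A Y : 'rV[R]_n -> Prop).
Variable l : 'rV[R]_n -> 'rV[R]_n -> R.
Hypothesis convA : convex_subset A.
Hypothesis convl : convex_in_first A Y l.

Lemma jensen (I : eqType) (r : seq I) (P : pred I) (c : I -> R) (v : I -> 'rV[R]_n) z :
  (forall k, 0 <= c k) -> (forall k, A (v k)) -> Y z ->
  \sum_(k <- r | P k) c k = 1 ->
  A (\sum_(k <- r | P k) c k *: v k) /\
  l (\sum_(k <- r | P k) c k *: v k) z <= \sum_(k <- r | P k) c k * l (v k) z.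
Proof.
move=> + Av Yz; elim: r c => [|x r IH] c c0.
  by rewrite big_nil => /eqP; rewrite eq_sym oner_eq0.
rewrite !big_cons; case: ifP => Px; last exact: IH.
set S := \sum_(k <- r | P k) c k => cS.
have S0 : 0 <= S by apply: sumr_ge0.
have cx01 : 0 <= c x <= 1 by rewrite c0 -cS lerDl.
have [S_eq0|S_neq0] := eqVneq S 0.
  have c_eq0 k : k \in r -> P k -> c k = 0.
    move: S_eq0 => /eqP; rewrite psumr_eq0 // => /allP /(_ k) + kr Pk.
    by rewrite kr Pk => /(_ isT) /implyP /(_ isT) /eqP.
  have -> : \sum_(k <- r | P k) c k *: v k = 0.
    by rewrite big_seq_cond big1 // => k /andP[kr Pk]; rewrite c_eq0 ?scale0r.
  have -> : \sum_(k <- r | P k) c k * l (v k) z = 0.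
    by rewrite big_seq_cond big1 // => k /andP[kr Pk]; rewrite c_eq0 ?mul0r.
  have -> : c x = 1 by rewrite -cS S_eq0 addr0.
  by rewrite scale1r mul1r !addr0.
(* Renormalize the tail to a convex combination, then mix it with [v x]. *)
have cS' : \sum_(k <- r | P k) c k / S = 1 by rewrite -mulr_suml divff.
have [IHA IHl] := IH _ (fun k => divr_ge0 (c0 k) S0) cS'.
have cxS : 1 - c x = S by rewrite -cS addrC addKr.
have -> : \sum_(k <- r | P k) c k *: v k =
    (1 - c x) *: \sum_(k <- r | P k) (c k / S) *: v k.
  rewrite cxS scaler_sumr; apply: eq_bigr => k _.
  by rewrite scalerA mulrC divfK.
have -> : \sum_(k <- r | P k) c k * l (v k) z =
    (1 - c x) * \sum_(k <- r | P k) (c k / S) * l (v k) z.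
  rewrite cxS mulr_sumr; apply: eq_bigr => k _.
  by rewrite mulrA [S * _]mulrC divfK.
split; first exact: convA.
apply: le_trans (convl (Av x) IHA Yz cx01) _.
by rewrite lerD2l ler_wpM2l // subr_ge0; case/andP: cx01.
Qed.

End Jensen.

Section SocialWeights.
Variables (R : realType) (N n : nat) (Omega : nat -> 'I_N -> {set 'I_N}).
Variables (t : nat) (s : state R N n).
Hypothesis w_hat_gt0 : forall k, 0 < w_hat s k.

Lemma sum_w_hat_gt0 j : 0 < \sum_(k in Lambda Omega t j) w_hat s k.
Proof.
rewrite (bigD1 j) ?setU11 //= ltr_pwDl //.
by apply: sumr_ge0 => k _; exact: ltW.
Qed.

Lemma w_ge0 j k : 0 <= w Omega t s j k.
Proof.
rewrite /w; case: ifP => // _.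
by rewrite divr_ge0 // ltW // sum_w_hat_gt0.
Qed.

Lemma sum_w j : \sum_(k in Lambda Omega t j) w Omega t s j k = 1.
Proof.
rewrite (eq_bigr (fun k => w_hat s k / \sum_(k in Lambda Omega t j) w_hat s k)).
  by rewrite -mulr_suml divff // gt_eqF // sum_w_hat_gt0.
by move=> k kL; rewrite /w kL.
Qed.

End SocialWeights.

Section D2EAL.
Variables (R : realType) (N n : nat) (A Y : 'rV[R]_n -> Prop).
Variables (l : 'rV[R]_n -> 'rV[R]_n -> R) (y : nat -> 'rV[R]_n).
Variables (f : nat -> 'I_N -> 'rV[R]_n) (Omega : nat -> 'I_N -> {set 'I_N}).
Variables (eta_a eta_w : R).
Hypothesis convA : convex_subset A.
Hypothesis l_itv : forall a b, A a -> Y b -> 0 <= l a b <= 1.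
Hypothesis convl : convex_in_first A Y l.
Hypothesis yY : forall t, Y (y t).
Hypothesis fA : forall t j, A (f t j).

Local Notation st t := (run l y f Omega eta_a eta_w t).
Local Notation Lbar := (Lbar l y f Omega eta_a eta_w).
Local Notation Lhat := (Lhat l y f Omega eta_a eta_w).

Lemma a_hat_gt0 t j : 0 < a_hat (st t) j /\ 0 < a_hat' (st t) j.
Proof.
elim: t j => [|t IH] j /=; first by rewrite ltr01.
by have [? ?] := IH j; rewrite !mulr_gt0 ?expR_gt0.
Qed.

Lemma alpha_itv t j : 0 <= alpha (st t) j <= 1.
Proof.
have [a_gt0 a'_gt0] := a_hat_gt0 t j.
have a_sum_gt0 := addr_gt0 a_gt0 a'_gt0.
apply/andP; split; first by rewrite divr_ge0 // ltW.
by rewrite ler_pdivrMr // mul1r lerDl ltW.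
Qed.

Lemma w_hat_expR t j : w_hat (st t) j = expR (- (eta_w * Lbar t j)).
Proof.
elim: t j => [|t IH] j; first by rewrite /Lbar big_ord0 mulr0 oppr0 expR0.
by rewrite /= IH /Lbar big_ord_recr /= -expRD mulrDr opprD.
Qed.

Lemma w_hat_gt0 t j : 0 < w_hat (st t) j.
Proof. by rewrite w_hat_expR expR_gt0. Qed.

Lemma social_jensen t j (v : 'I_N -> 'rV[R]_n) z : (forall k, A (v k)) -> Y z ->
  A (\sum_(k in Lambda Omega t j) w Omega t (st t) j k *: v k) /\
  l (\sum_(k in Lambda Omega t j) w Omega t (st t) j k *: v k) z <=
    \sum_(k in Lambda Omega t j) w Omega t (st t) j k * l (v k) z.
Proof.
move=> vA zY; apply: (jensen convA convl) => //.
  by apply: w_ge0 => k; exact: w_hat_gt0.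
by apply: sum_w => k; exact: w_hat_gt0.
Qed.

Lemma f_hat_in t j : A (f_hat (st t) j).
Proof.
elim: t j => [|t IH] j /=; first exact: fA.
have f_bar_in k : A (f_bar f t (st t) k) by apply: convA => //; exact: alpha_itv.
by case: (social_jensen t j f_bar_in (yY 0)).
Qed.

Lemma f_bar_in t j : A (f_bar f t (st t) j).
Proof. by apply: convA; [exact: fA | exact: f_hat_in | exact: alpha_itv]. Qed.

Lemma loss_f_hat_le t j :
  l (f_hat (st t.+1) j) (y t.+1) <=
  \sum_(k in Lambda Omega t j) w Omega t (st t) j k * l (f_bar f t (st t) k) (y t.+1).
Proof. by case: (social_jensen t j (f_bar_in t) (yY t.+1)). Qed.

Hypothesis eta_w_gt0 : 0 < eta_w.
Variables (T : nat) (i : 'I_N).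
Hypothesis neighbours_shrink :
  forall t, (1 <= t <= T)%N -> Omega t i \subset Omega t.-1 i.

Definition potential t := \sum_(k in Lambda Omega t i) w_hat (st t) k.

Lemma potential_gt0 t : 0 < potential t.
Proof. by apply: sum_w_hat_gt0 => k; exact: w_hat_gt0. Qed.

Lemma potential0 : potential 0 = #|Lambda Omega 0 i|%:R.
Proof. by rewrite /potential sumr_const. Qed.

Lemma expR_Lbar_le_potential j : j \in Lambda Omega T i ->
  expR (- (eta_w * Lbar T j)) <= potential T.
Proof.
move=> jL; rewrite -w_hat_expR /potential (bigD1 j) //= lerDl.
by apply: sumr_ge0 => k _; exact: ltW (w_hat_gt0 _ _).
Qed.

Lemma potential_step t : (t < T)%N ->
  potential t.+1 <=
  potential t * expR (- (eta_w * l (f_hat (st t.+1) i) (y t.+1)) + eta_w ^+ 2 / 8).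
Proof.
move=> tT.
set c := w Omega t (st t) i.
set lb := fun k => l (f_bar f t (st t) k) (y t.+1).
have Lsub : Lambda Omega t.+1 i \subset Lambda Omega t i.
  by apply: finset.setUS; exact: neighbours_shrink.
apply: (@le_trans _ _
    (\sum_(k in Lambda Omega t i) w_hat (st t) k * expR (- (eta_w * lb k)))).
  rewrite /potential [leRHS](big_setID (Lambda Omega t.+1 i)) /=.
  rewrite (finset.setIidPr Lsub) lerDl.
  by apply: sumr_ge0 => k _; rewrite mulr_ge0 ?expR_ge0 // ltW ?w_hat_gt0.
have -> : \sum_(k in Lambda Omega t i) w_hat (st t) k * expR (- (eta_w * lb k)) =
    potential t * \sum_(k in Lambda Omega t i) c k * expR (- (eta_w * lb k)).
  rewrite mulr_sumr; apply: eq_bigr => k kL.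
  by rewrite /c /w kL mulrA [potential t * _]mulrC divfK // gt_eqF // potential_gt0.
apply: ler_wpM2l; first exact/ltW/potential_gt0.
have c_ge0 k : 0 <= c k by apply: w_ge0 => k'; exact: w_hat_gt0.
have c_sum : \sum_(k in Lambda Omega t i) c k = 1.
  by apply: sum_w => k; exact: w_hat_gt0.
have lb_itv k : 0 <= lb k <= 1 by apply: l_itv; [exact: f_bar_in | exact: yY].
apply: le_trans (mix_expR_le (ltW eta_w_gt0) c_ge0 lb_itv c_sum) _.
rewrite ler_expR lerD2r lerN2.
by apply: ler_wpM2l; [exact: ltW | exact: loss_f_hat_le].
Qed.

Lemma potential_le t : (t <= T)%N ->
  potential t <= potential 0 * expR (- (eta_w * Lhat t i) + eta_w ^+ 2 / 8 * t%:R).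
Proof.
elim: t => [|t IH] tT; first by rewrite /Lhat big_ord0 !mulr0 oppr0 addr0 expR0 mulr1.
apply: le_trans (potential_step tT) _.
apply: le_trans (ler_wpM2r (expR_ge0 _) (IH (ltnW tT))) _.
rewrite -[_ * _ * expR _]mulrA -expRD /Lhat big_ord_recr /= -natr1.
rewrite le_eqVlt; apply/orP; left; apply/eqP.
by congr (_ * expR _); ring.
Qed.

Lemma ln_potential_bound j : j \in Lambda Omega T i ->
  - (eta_w * Lbar T j) <=
    ln #|Lambda Omega 0 i|%:R - eta_w * Lhat T i + eta_w ^+ 2 / 8 * T%:R.
Proof.
move=> jL.
have := le_trans (expR_Lbar_le_potential jL) (potential_le (leqnn T)).
have P0 := potential_gt0 0.
rewrite -ler_ln ?posrE ?mulr_gt0 ?expR_gt0 // lnM ?posrE ?expR_gt0 //.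
by rewrite !expRK potential0 addrA.
Qed.

End D2EAL.

Theorem lemma2 (R : realType) (N n : nat)
  (A Y : 'rV[R]_n -> Prop) (l : 'rV[R]_n -> 'rV[R]_n -> R)
  (y : nat -> 'rV[R]_n) (f : nat -> 'I_N -> 'rV[R]_n)
  (Omega : nat -> 'I_N -> {set 'I_N}) (eta_a eta_w : R) (T : nat) (i : 'I_N) :
  convex_subset A -> convex_subset Y ->
  (forall a b, A a -> Y b -> 0 <= l a b <= 1) ->
  convex_in_first A Y l ->
  (forall t, Y (y t)) ->
  (forall t j, A (f t j)) ->
  (* undirected communication graph *)
  (forall t j k, (k \in Omega t j) = (j \in Omega t k)) ->
  (1 <= T)%N -> 0 < eta_a -> 0 < eta_w ->
  (* Assumption 1 *)
  (forall t, (1 <= t <= T)%N -> Omega t i \subset Omega t.-1 i) ->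
  forall j, j \in Lambda Omega T i ->
    Lhat l y f Omega eta_a eta_w T i - Lbar l y f Omega eta_a eta_w T j
      <= eta_w * T%:R / 8 + ln (#|Lambda Omega 0 i|%:R) / eta_w.
Proof.
move=> convA _ l_itv convl yY fA _ _ _ eta_w_gt0 shrink j jL.
have := ln_potential_bound eta_a convA l_itv convl yY fA eta_w_gt0 shrink jL.
set Lh := Lhat _ _ _ _ _ _ _ _; set Lb := Lbar _ _ _ _ _ _ _ _; set d := ln _ => bound.
rewrite -(ler_pM2l eta_w_gt0) mulrBr.
have -> : eta_w * (eta_w * T%:R / 8 + d / eta_w) = eta_w ^+ 2 / 8 * T%:R + d.
  by field; rewrite gt_eqF.
lra.
Qed.
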